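(* For all $f,g\in I\cdot\mathrm{Mult}[[B]]=\{I\cdot F: F\in\mathrm{Mult}[[B]]\}$, $$f\boxtimes g=(f\boxtimes_1 g)\cdot(f\boxtimes_2 g),\qquad g\,\underline\boxtimes\,f=(f\boxtimes_2 g)\cdot(f\boxtimes_1 g).$$
   Context: $B$ is a unital algebra over a field $\mathbb K$ of characteristic zero. $\mathrm{Mult}[[B]]$: sequences $f=(f_n)_{n\ge0}$ of multilinear maps $f_n:B^n\to B$. Product $(f\cdot g)_n(x_1,\dots,x_n)=\sum_{k=0}^n f_k(x_1,\dots,x_k)g_{n-k}(x_{k+1},\dots,x_n)$; $I=(\delta_{n,1}\mathrm{id}_B)$, so $(I\cdot F)_n(x_1,\dots,x_n)=x_1F_{n-1}(x_2,\dots,x_n)$, $(I\cdot F)_0=0$. Planar binary trees: $Y_0=\{|\}$, $Y_n=\{\sigma\vee\tau:\sigma\in Y_k,\tau\in Y_l,k+l=n-1\}$ ($\sigma\vee\tau$: root with left subtree $\sigma$, right subtree $\tau$); each $\tau\in Y_n$, $n\ge1$, is uniquely $\tau_1\vee(\tau_2\vee(\cdots\vee(\tau_k\vee|)))$; $j_i=|\tau_1|+\dots+|\tau_i|+i$. For $f,g\in\mathrm{Mult}[[B]]$: $(f\cup g)_|=1$, $(f\cup g)_\tau(x_1,\dots,x_n)=g_k((g\cup f)_{\tau_1}(x_1,\dots,x_{j_1-1})x_{j_1},\dots,(g\cup f)_{\tau_k}(x_{j_{k-1}+1},\dots,x_{j_k-1})x_{j_k})$. $R:Y\to Y$: $R(|)=|$,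 $R(\sigma\vee\tau)=(|\vee R(\sigma))\vee R(\tau)$. Boxed convolutions (for $n\ge1$): $(f\boxtimes g)_n(x_1,\dots,x_n)=\sum_{\tau\in Y_n}(f\cup g)_{R(\tau)}(x_1,1,x_2,1,\dots,x_n,1)$, $(f\boxtimes g)_0=g_0$; $(f\underline\boxtimes g)_n(x_1,\dots,x_n)=\sum_{\tau\in Y_n}(f\cup g)_{R(\tau)}(1,x_1,1,x_2,\dots,1,x_n)$, $(f\underline\boxtimes g)_0=g_0$; $(f\boxtimes_1 g)_n(x_1,\dots,x_n)=\sum_{\tau\in Y_{n-1}}(g\cup f)_{|\vee R(\tau)}(x_1,1,x_2,1,\dots,1,x_n)$, $(f\boxtimes_1 g)_0=0$; $(f\boxtimes_2 g)_n(x_1,\dots,x_n)=\sum_{\tau\in Y_n}(f\cup g)_{|\vee R(\tau)}(1,x_1,1,x_2,\dots,1,x_n,1)$, $(f\boxtimes_2 g)_0=g_1(1)$. *)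

From mathcomp Require Import all_boot all_order all_algebra.
Set Implicit Arguments. Unset Strict Implicit. Unset Printing Implicit Defensive.
Import GRing.Theory.
Local Open Scope ring_scope.

(* An element f = (f_n)_n of Mult[[B]] is encoded as a single function
   f : seq B -> B, with f_n(x_1,...,x_n) := f [:: x_1; ...; x_n]
   (the arity n is the length of the input list). *)

Section Mult.
Variables (K : fieldType) (B : algType K).

Definition multilinear (f : seq B -> B) : Prop :=
  forall (l r : seq B) (c : K) (x y : B),
    f (l ++ (c *: x + y) :: r) = c *: f (l ++ x :: r) + f (l ++ y :: r).

Definition multM (f g : seq B -> B) : seq B -> B :=
  fun s => \sum_(k < (size s).+1) f (take k s) * g (drop k s).

Definition multI : seq B -> B :=
  fun s => if s is [:: x] then x else 0.

Definition inIMult (f : seq B -> B) : Prop :=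
  exists F, multilinear F /\ f = multM multI F.

End Mult.

Inductive tree := Leaf | Node of tree & tree.

Fixpoint tsize (t : tree) : nat :=
  match t with Leaf => 0 | Node l r => (tsize l + tsize r).+1 end.

Fixpoint Ys (n : nat) : seq (seq tree) :=
  match n with
  | 0 => [:: [:: Leaf]]
  | m.+1 => let L := Ys m in
      rcons L (flatten [seq [seq Node s t | s <- nth [::] L k, t <- nth [::] L (m - k)]
                       | k <- iota 0 m.+1])
  end.

(* Y_n : the list of planar binary trees with n internal vertices *)
Definition Y (n : nat) : seq tree := nth [::] (Ys n) n.

Fixpoint Rt (t : tree) : tree :=
  match t with Leaf => Leaf | Node s t => Node (Node Leaf (Rt s)) (Rt t) end.

Section Cup.
Variables (K : fieldType) (B : algType K).

(* (f cup g)_tau ; for tau = tau_1 v (tau_2 v (... v (tau_k v |))) :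
   (f cup g)_tau(x) = g_k((g cup f)_{tau_1}(block_1) x_{j_1}, ...,
                          (g cup f)_{tau_k}(block_k) x_{j_k}) *)
Fixpoint cup (f g : seq B -> B) (t : tree) (s : seq B) {struct t} : B :=
  match t with
  | Leaf => 1
  | Node l r =>
      g (cup g f l (take (tsize l) s) * nth 0 s (tsize l)
         :: (fix args (u : tree) (s' : seq B) {struct u} : seq B :=
               match u with
               | Leaf => [::]
               | Node l' r' =>
                   cup g f l' (take (tsize l') s') * nth 0 s' (tsize l')
                   :: args r' (drop (tsize l').+1 s')
               end) r (drop (tsize l).+1 s))
  end.

Definition inter_r (x : seq B) : seq B := flatten [seq [:: xi; 1] | xi <- x].
Definition inter_l (x : seq B) : seq B := flatten [seq [:: 1; xi] | xi <- x].

Definition boxtimes (f g : seq B -> B) : seq B -> B :=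
  fun x => if x is [::] then g [::] else
    \sum_(t <- Y (size x)) cup f g (Rt t) (inter_r x).

Definition uboxtimes (f g : seq B -> B) : seq B -> B :=
  fun x => if x is [::] then g [::] else
    \sum_(t <- Y (size x)) cup f g (Rt t) (inter_l x).

Definition boxtimes1 (f g : seq B -> B) : seq B -> B :=
  fun x => if x is x1 :: x' then
    \sum_(t <- Y (size x).-1) cup g f (Node Leaf (Rt t)) (x1 :: inter_l x')
  else 0.

Definition boxtimes2 (f g : seq B -> B) : seq B -> B :=
  fun x => if x is [::] then g [:: 1] else
    \sum_(t <- Y (size x)) cup f g (Node Leaf (Rt t)) (rcons (inter_l x) 1).

End Cup.

From HB Require Import structures.
From Pilot Require Import Defs.
From mathcomp Require Import all_boot all_order all_algebra.
From Stdlib Require Import FunctionalExtensionality.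
Set Implicit Arguments. Unset Strict Implicit. Unset Printing Implicit Defensive.
Import GRing.Theory.
Local Open Scope ring_scope.

(* Splitting Y_(n+1) by the size k of the left subtree, every tree is s v t
   with s in Y_k, t in Y_(n-k), and R(s v t) = (| v R s) v R t.  In
   (f cup g)_(R(s v t)) the outer map is g = I.G, so its first argument,
   (g cup f)_(| v R s)(...) x, splits off as a left factor and what remains is
   G of the other arguments.  On the interleaved input (x_1,1,...,x_n,1) the
   left factor is the s-term of (f boxtimes_1 g)(x_1..x_(k+1)), and the rest
   is the t-term of (f boxtimes_2 g)(x_(k+2)..x_(n+1)), whose extra leading
   argument is a 1.  Summing over k gives the product formula; the second
   identity is the same computation with f = I.F and input (1,x_1,...,1,x_n). *)

Lemma tree_comparable : comparable tree.
Proof. by rewrite /comparable /decidable; decide equality. Qed.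

HB.instance Definition _ := comparableMixin tree_comparable.

Lemma size_Ys n : size (Ys n) = n.+1.
Proof. by elim: n => //= n IH; rewrite size_rcons IH. Qed.

Lemma nth_Ys n k : (k <= n)%N -> nth [::] (Ys n) k = Y k.
Proof.
elim: n k => [|n IH] k; first by rewrite leqn0 => /eqP ->.
rewrite leq_eqVlt => /orP [/eqP -> //|hk].
by rewrite /= nth_rcons size_Ys hk IH.
Qed.

Lemma Y_succ n :
  Y n.+1 = flatten [seq [seq Node s t | s <- Y k, t <- Y (n - k)] | k <- iota 0 n.+1].
Proof.
rewrite {1}/Y -[Ys n.+1]/(rcons (Ys n) _) nth_rcons size_Ys ltnn eqxx.
congr flatten; apply/eq_in_map => k; rewrite mem_iota add0n ltnS => hk.
by rewrite !nth_Ys // leq_subr.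
Qed.

Lemma big_Y_succ (R : nmodType) n (F : tree -> R) :
  \sum_(t <- Y n.+1) F t =
  \sum_(k < n.+1) \sum_(s <- Y k) \sum_(t <- Y (n - k)) F (Node s t).
Proof.
rewrite Y_succ big_flatten big_map -[iota 0 n.+1]/(index_iota 0 n.+1) big_mkord.
by apply: eq_bigr => k _; rewrite big_allpairs_dep.
Qed.

Lemma tsize_Y n t : t \in Y n -> Defs.tsize t = n.
Proof.
elim/ltn_ind: n t => -[|n] IH t; first by rewrite inE => /eqP ->.
rewrite Y_succ => /flatten_mapP [k]; rewrite mem_iota ltnS => /andP [_ hk].
move=> /allpairsPdep [s [u [hs hu ->]]] /=.
by rewrite (IH k _ s hs) 1?(IH (n - k)%N _ u hu) ?subnKC // ltnS ?leq_subr.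
Qed.

Lemma tsize_Rt t : Defs.tsize (Rt t) = (Defs.tsize t).*2.
Proof. by elim: t => //= l -> r ->; rewrite add0n doubleS doubleD. Qed.

Section Interleave.
Variables (K : fieldType) (B : algType K).
Implicit Types (x : seq B) (k : nat).

Lemma rcons_inter_l x : rcons (inter_l x) 1 = 1 :: inter_r x.
Proof. by elim: x => //= a x ->. Qed.

Lemma take_inter_r k y x :
  (k <= size x)%N -> take k.*2.+1 (inter_r (y :: x)) = y :: inter_l (take k x).
Proof.
rewrite -[LHS]/(y :: take k.*2 (1 :: inter_r x)) => hk; congr (_ :: _).
by elim: x k hk => [|a x IH] [|k] //= hk; rewrite IH.
Qed.

Lemma nth_inter_r k y x : (k <= size x)%N -> nth 0 (inter_r (y :: x)) k.*2.+1 = 1.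
Proof.
rewrite -[LHS]/(nth 0 (1 :: inter_r x) k.*2).
by elim: x k => [|a x IH] [|k] //= hk; rewrite IH.
Qed.

Lemma drop_inter_r k y x : drop k.*2.+2 (inter_r (y :: x)) = inter_r (drop k x).
Proof.
rewrite -[LHS]/(drop k.*2 (inter_r x)).
by elim: x k => [|a x IH] [|k] //=.
Qed.

Lemma take_inter_l k x :
  (k < size x)%N -> take k.*2.+1 (inter_l x) = rcons (inter_l (take k x)) 1.
Proof. by elim: x k => [|a x IH] [|k] //= hk; rewrite IH. Qed.

Lemma nth_inter_l k x : nth 0 (inter_l x) k.*2.+1 = nth 0 x k.
Proof. by elim: x k => [|a x IH] [|k] //=; rewrite nth_nil. Qed.

Lemma drop_inter_l k x : drop k.*2 (inter_l x) = inter_l (drop k x).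
Proof. by elim: x k => [|a x IH] [|k] //=. Qed.

End Interleave.

Section MultProduct.
Variables (K : fieldType) (B : algType K).

Lemma multM_cons (h1 h2 : seq B -> B) y x : h1 [::] = 0 ->
  multM h1 h2 (y :: x) = \sum_(k < (size x).+1) h1 (y :: take k x) * h2 (drop k x).
Proof. by move=> h10; rewrite /multM big_ord_recl h10 mul0r add0r. Qed.

Lemma multM_r0 (h1 h2 : seq B -> B) x : h2 [::] = 0 ->
  multM h1 h2 x = \sum_(k < size x) h1 (take k x) * h2 (drop k x).
Proof. by move=> h20; rewrite /multM big_ord_recr /= drop_size h20 mulr0 addr0. Qed.

Lemma multI_nil G : multM (@multI K B) G [::] = 0.
Proof. by rewrite /multM big_ord_recl big_ord0 /= mul0r addr0. Qed.

Lemma multI_cons G y s : multM (@multI K B) G (y :: s) = y * G s.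
Proof.
rewrite /multM 2!big_ord_recl big1 => [|i _]; first by rewrite /= mul0r add0r addr0 take0 drop0.
by case: s i => [|a s] [[|j] hj] //=; rewrite mul0r.
Qed.

End MultProduct.

Section CupIMult.
Variables (K : fieldType) (B : algType K).
Implicit Types (f g F G : seq B -> B) (s x : seq B).

Notation IM := (multM (@multI K B)).

Fixpoint cup_args f g (u : tree) s : seq B :=
  if u is Node l r then
    cup f g l (take (Defs.tsize l) s) * nth 0 s (Defs.tsize l)
      :: cup_args f g r (drop (Defs.tsize l).+1 s)
  else [::].

Lemma cupE f g t s : cup f g t s = if t is Leaf then 1 else g (cup_args g f t s).
Proof.
case: t => //= l r; congr (g (_ :: _)); move: (drop _ s).
by elim: r => //= l' _ r' IH s'; rewrite IH.
Qed.

Lemma cup_Node_multI f G l r s :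
  cup f (IM G) (Node l r) s =
  cup (IM G) f l (take (Defs.tsize l) s) * nth 0 s (Defs.tsize l) *
  G (cup_args (IM G) f r (drop (Defs.tsize l).+1 s)).
Proof. by rewrite cupE multI_cons. Qed.

Lemma cup_Node_Leaf_multI f G r y s :
  cup f (IM G) (Node Leaf r) (y :: s) = y * G (cup_args (IM G) f r s).
Proof. by rewrite cup_Node_multI /= mul1r drop0. Qed.

Lemma cup_Rt_Node_multI f G t u s :
  cup f (IM G) (Rt (Node t u)) s =
  cup (IM G) f (Node Leaf (Rt t)) (take (Defs.tsize t).*2.+1 s) *
  nth 0 s (Defs.tsize t).*2.+1 *
  G (cup_args (IM G) f (Rt u) (drop (Defs.tsize t).*2.+2 s)).
Proof. by rewrite [Rt _]/= cup_Node_multI [Defs.tsize _]/= tsize_Rt. Qed.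

Lemma boxtimes2E f g x :
  boxtimes2 f g x =
  \sum_(t <- Y (size x)) cup f g (Node Leaf (Rt t)) (rcons (inter_l x) 1).
Proof. by case: x => [|a x] //; rewrite big_seq1 /= mul1r. Qed.

Lemma boxtimes_multIr f G :
  boxtimes f (IM G) =1 multM (boxtimes1 f (IM G)) (boxtimes2 f (IM G)).
Proof.
case=> [|x1 x]; first by rewrite [LHS]/= multI_nil /multM big_ord1 /= mul0r.
rewrite multM_cons // /boxtimes -[size (x1 :: x)]/(size x).+1 big_Y_succ.
apply: eq_bigr => k _; have hk : (k <= size x)%N by rewrite -ltnS.
rewrite boxtimes2E /boxtimes1 -[(size _).-1]/(size (take k x)) size_takel // size_drop.
rewrite mulr_suml; apply: eq_big_seq => t /tsize_Y tk; rewrite mulr_sumr.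
apply: eq_bigr => u _; rewrite cup_Rt_Node_multI rcons_inter_l cup_Node_Leaf_multI.
by rewrite tk take_inter_r // nth_inter_r // drop_inter_r mulr1 mul1r.
Qed.

Lemma uboxtimes_multIr g F :
  uboxtimes g (IM F) =1 multM (boxtimes2 (IM F) g) (boxtimes1 (IM F) g).
Proof.
case=> [|x1 x]; first by rewrite [LHS]/= multI_nil /multM big_ord1 /= mulr0.
rewrite multM_r0 // /uboxtimes -[size (x1 :: x)]/(size x).+1 big_Y_succ.
apply: eq_bigr => k _; have hk : (k < size (x1 :: x))%N by [].
rewrite (drop_nth 0 hk) boxtimes2E /boxtimes1 size_takel ?(ltnW hk) //.
rewrite -[(size _).-1]/(size (drop k.+1 (x1 :: x))) size_drop subSS.
rewrite mulr_suml; apply: eq_big_seq => t /tsize_Y tk; rewrite mulr_sumr.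
apply: eq_bigr => u _; rewrite cup_Rt_Node_multI cup_Node_Leaf_multI.
by rewrite tk take_inter_l // nth_inter_l -doubleS drop_inter_l mulrA.
Qed.

End CupIMult.

Theorem lemma3 (K : fieldType) (B : algType K) (hK : [pchar K] =i pred0)
    (f g : seq B -> B) :
  inIMult f -> inIMult g ->
  boxtimes f g = multM (boxtimes1 f g) (boxtimes2 f g) /\
  uboxtimes g f = multM (boxtimes2 f g) (boxtimes1 f g).
Proof.
move=> [F [_ ->]] [G [_ ->]].
by split; apply: functional_extensionality; [apply: boxtimes_multIr | apply: uboxtimes_multIr].
Qed.
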